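(* Let $n\ge 2$ be even and $r\ge 1$, let $V=\{1,\dots,n\}$, $R=\{n+1,\dots,n+r\}$, and let $A^R=(a_{ij})_{i,j\in V\cup R}$ be a skew-symmetric complex matrix with zero column sums, with associated graphs $G^R$ (on $V\cup R$) and $G$ (on $V$). Let $\mathcal{M}$ be the set of perfect matchings of $G$. Let $\mathcal{F}$ be the set of spanning forests of $G^R$ satisfying Condition (C) (without reference matching), and for $M_0\in\mathcal{M}$ let $\mathcal{F}(M_0)$ be the set of spanning forests of $G^R$ compatible with $M_0$ satisfying Condition (C) relative to $M_0$. Then $$\mathcal{F}=\bigcup_{M_0\in\mathcal{M}}\mathcal{F}(M_0).$$
   Context: $G^R$ has vertex set $V\cup R$ and an edge $ij$ whenever $a_{ij}\ne0$; $G$ is its induced subgraph on $V$. A spanning forest of $G^R$ is a set $F$ of oriented edges of $G^R$ containing no cycle such that each vertex of $V$ has exactly one outgoing edge in $F$ and vertices of $R$ have none. $F$ is compatible with a perfect matching $M_0$ if, forgetting orientations, $F\supseteq M_0$. Trimming algorithm, applied to a spanning forest $F$: set $F_1=F$. At step $i\ge1$, let $\ell^i$ be the leaf of $F_i$ (vertex of $V$ with an outgoing edge in $F_i$ and no incoming edge in $F_i$) with the largest label. Follow the unique directed path in $F_i$ from $\ell^i$, stopping at the first vertex reached which is a vertex of $R$, or a fork (vertex with more than one incoming edge in $F_i$), or a vertex with label smaller than $\ell^i$; call it $\lambda_{\ell^i}$. Set $F_{i+1}=F_i\setminus\lambda_{\ell^i}$; stop when $F_{i+1}$ is empty, after $N$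 steps. Condition (C) (without reference matching): each path $\lambda_{\ell^1},\dots,\lambda_{\ell^N}$ has even length. Condition (C) relative to $M_0$: each such path has even length and its first edge belongs to $M_0$. *)

From mathcomp Require Import all_boot all_algebra.
From mathcomp Require Export complex.
From mathcomp Require Export Rstruct.
From Stdlib Require Rdefinitions.

Set Implicit Arguments.
Unset Strict Implicit.
Unset Printing Implicit Defensive.

Import GRing.Theory.
Local Open Scope ring_scope.

Notation Cplx := (Rdefinitions.R)[i].

(* The vertex with Rocq index k corresponds
   to the paper's label k+1: V = {0,..,n-1} (labels 1..n),
   R = {n,..,n+r-1} (labels n+1..n+r). *)

Section Forests.
Variables (n r : nat).
Local Notation T := ('I_(n + r)).
Variable A : 'M[Cplx]_(n + r).

Definition inV (v : T) : bool := (v < n)%N.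
Definition inR (v : T) : bool := (n <= v)%N.

Definition edgeGR (i j : T) : bool := A i j != 0.

Definition perfect_matching (M : {set {set T}}) : Prop :=
  (forall e, e \in M -> exists i j : T,
      [/\ e = [set i; j], i != j, inV i, inV j & edgeGR i j]) /\
  (forall v : T, inV v -> #|[set e in M | v \in e]| = 1%N).

Definition outs (F : {set T * T}) (v : T) := [set e in F | e.1 == v].
Definition ins (F : {set T * T}) (v : T) := [set e in F | e.2 == v].

Definition no_cycle (F : {set T * T}) : Prop :=
  forall (x : T) (p : seq T),
    path (fun a b => (a, b) \in F) x p -> p != [::] -> last x p != x.

Definition spanning_forest (F : {set T * T}) : Prop :=
  [/\ (forall e, e \in F -> edgeGR e.1 e.2),
      (forall v : T, inV v -> #|outs F v| = 1%N),
      (forall v : T, inR v -> #|outs F v| = 0%N) &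
      no_cycle F].

Definition compatible (F : {set T * T}) (M0 : {set {set T}}) : Prop :=
  forall i j : T, [set i; j] \in M0 -> ((i, j) \in F) || ((j, i) \in F).

Definition leafb (F : {set T * T}) (v : T) : bool :=
  [&& inV v, (0 < #|outs F v|)%N & #|ins F v| == 0%N].

Definition max_leaf (F : {set T * T}) : option T :=
  [pick v | leafb F v && [forall w, leafb F w ==> (w <= v)%N]].

Definition succ (F : {set T * T}) (v : T) : option T :=
  [pick w | (v, w) \in F].

Definition stopb (F : {set T * T}) (l w : T) : bool :=
  [|| inR w, (1 < #|ins F w|)%N | (w < l)%N].

Fixpoint follow (fuel : nat) (F : {set T * T}) (l v : T) : seq T :=
  match fuel with
  | 0 => [::]
  | S f =>
    match succ F v with
    | None => [::]
    | Some w => if stopb F l w then [:: w] else w :: follow f F l w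
    end
  end.

(* the path lambda_l, as the sequence of vertices after l; its length
   (number of edges) is the size of this sequence *)
Definition lambda (F : {set T * T}) (l : T) : seq T :=
  follow (n + r) F l l.

Definition path_edges (l : T) (p : seq T) : {set T * T} :=
  [set e | e \in zip (l :: p) p].

Fixpoint trim (fuel : nat) (F : {set T * T}) : seq (T * seq T) :=
  match fuel with
  | 0 => [::]
  | S f =>
    if F == set0 then [::] else
    match max_leaf F with
    | None => [::]
    | Some l => let p := lambda F l in
                (l, p) :: trim f (F :\: path_edges l p)
    end
  end.

Definition trimming (F : {set T * T}) : seq (T * seq T) := trim #|F| F.

Definition condC (F : {set T * T}) : bool :=
  all (fun lp => ~~ odd (size lp.2)) (trimming F).

Definition condC_rel (F : {set T * T}) (M0 : {set {set T}}) : bool :=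
  all (fun lp => ~~ odd (size lp.2) && ([set lp.1; head lp.1 lp.2] \in M0))
      (trimming F).

End Forests.

From mathcomp Require Import all_boot all_algebra.

(* Under Condition (C) every path lambda removed by the trimming algorithm has
   even length, so its first, third, fifth, ... edges cover each vertex of
   lambda except its endpoint exactly once; these are exactly the vertices
   losing their unique outgoing edge at that step.  Collected over the whole
   run, these edges form a perfect matching M0 of G, contained in F and
   containing the first edge of every lambda: F satisfies (C) relative to M0.
   Conversely, (C) relative to M0 trivially implies (C). *)

Set Implicit Arguments.
Unset Strict Implicit.
Unset Printing Implicit Defensive.

Section AlternateEdges.
Variable T : finType.
Implicit Types (x y z a b v : T) (p q : seq T).

Lemma mem_zip_belast x p a b : (a, b) \in zip (x :: p) p -> a \in belast x p.
Proof.
elim: p x => [|y p IHp] x //=; rewrite !inE => /orP[/eqP[-> _]|/IHp->].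
  by rewrite eqxx.
by rewrite orbT.
Qed.

Lemma belast_mem_zip x p a : a \in belast x p -> exists b, (a, b) \in zip (x :: p) p.
Proof.
elim: p x => [|y p IHp] x //=; rewrite inE => /orP[/eqP->|/IHp[b zab]].
  by exists y; rewrite mem_head.
by exists b; rewrite inE zab orbT.
Qed.

Lemma path_mem_zip (e : rel T) x p a b :
  path e x p -> (a, b) \in zip (x :: p) p -> e a b.
Proof.
elim: p x => [|y p IHp] x //= /andP[exy pth].
by rewrite inE => /orP[/eqP[-> ->]|/(IHp _ pth)].
Qed.

Lemma head_mem_zip x p : p != [::] -> (x, head x p) \in zip (x :: p) p.
Proof. by case: p => //= y p _; rewrite mem_head. Qed.

Lemma acyclic_path_uniq (e : rel T) x p :
  (forall y q, path e y q -> q != [::] -> last y q != y) ->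
  path e x p -> uniq (x :: p).
Proof.
move=> acyclic; elim: p x => [|y p IHp] x // /andP[exy pth].
rewrite cons_uniq IHp // andbT; apply/negP => x_in.
have : path e x (y :: p) by rewrite /= exy.
case/splitPr: x_in => p1 p2; rewrite cat_path => /andP[pth1 /andP[ex _]].
have := acyclic x (rcons p1 x).
by rewrite rcons_path pth1 ex last_rcons eqxx -size_eq0 size_rcons => /(_ isT isT).
Qed.

Lemma set2_eq_pair x y a b :
  [set x; y] = [set a; b] -> (x, y) = (a, b) \/ (y, x) = (a, b).
Proof.
move=> Exy; have : a \in [set x; y] by rewrite Exy set21.
have : b \in [set x; y] by rewrite Exy set22.
have : y \in [set a; b] by rewrite -Exy set22.
have : x \in [set a; b] by rewrite -Exy set21.
by do 4 (case/set2P=> ?; try subst); first [by left | by right].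
Qed.

Fixpoint alt_pairs x p : {set {set T}} :=
  if p is y :: z :: q then [set x; y] |: alt_pairs z q else set0.

Lemma alt_pairs_cons x y z q :
  alt_pairs x [:: y, z & q] = [set x; y] |: alt_pairs z q.
Proof. by []. Qed.

Lemma seq_ind2 (P : T -> seq T -> Prop) :
  (forall x, P x [::]) -> (forall x y, P x [:: y]) ->
  (forall x y z q, P z q -> P x [:: y, z & q]) -> forall x p, P x p.
Proof.
move=> P0 P1 P2 x p; have [k] := ubnP (size p).
elim: k x p => [|k IHk] x [|y [|z q]] //= size_q.
by apply/P2/IHk; rewrite -ltnS ltnW.
Qed.

Lemma alt_pairsP x p e : e \in alt_pairs x p ->
  exists a b, [/\ e = [set a; b], (a, b) \in zip (x :: p) p,
                  a \in belast x p & b \in belast x p].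
Proof.
move: x p e; apply: seq_ind2 => [x|x y|x y z q IHq] e; try by rewrite inE.
rewrite alt_pairs_cons in_setU1 => /orP[/eqP->|/IHq[a [b [-> zab ab bb]]]].
  by exists x, y; rewrite !inE !eqxx !orbT.
by exists a, b; rewrite !inE zab ab bb !orbT.
Qed.

Lemma alt_pairs_sub_belast x p e v :
  e \in alt_pairs x p -> v \in e -> v \in belast x p.
Proof. by case/alt_pairsP=> a [b [-> _ ab bb]] /set2P[]->. Qed.

Lemma head_alt_pairs x p :
  ~~ odd (size p) -> p != [::] -> [set x; head x p] \in alt_pairs x p.
Proof. by case: p => [|y [|z q]] //= _ _; rewrite setU11. Qed.

Lemma card_alt_pairs_at x p v : ~~ odd (size p) -> uniq (belast x p) ->
  #|[set e in alt_pairs x p | v \in e]| = (v \in belast x p : nat).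
Proof.
move: x p; apply: seq_ind2 => [x _ _|//|x y z q IHq].
  by apply/eqP; rewrite cards_eq0; apply/eqP/setP => e; rewrite !inE.
rewrite alt_pairs_cons /= negbK => even_q /and3P[].
rewrite inE negb_or => /andP[_ xq] yq uq.
rewrite !inE orbA; have [vxy|vxy] := boolP ((v == x) || (v == y)).
  suff -> : [set e in [set x; y] |: alt_pairs z q | v \in e] = [set [set x; y]].
    by rewrite cards1.
  apply/setP => e; rewrite !inE; apply/andP/eqP => [[/orP[/eqP//|qe ve]]|->].
    case/orP: vxy => /eqP vxy; subst v.
      by rewrite (alt_pairs_sub_belast qe ve) in xq.
    by rewrite (alt_pairs_sub_belast qe ve) in yq.
  by split; rewrite ?eqxx // !inE.
rewrite /= -IHq //; apply: eq_card => e; rewrite !inE.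
have [->|//] := eqVneq e [set x; y].
by rewrite in_set2 (negbTE vxy) !andbF.
Qed.

Lemma card_setU_at (M N : {set {set T}}) v :
  #|[set e in M | v \in e]| = 0 ->
  #|[set e in M :|: N | v \in e]| = #|[set e in N | v \in e]|.
Proof.
move/eqP; rewrite cards_eq0 => /eqP/setP M0; apply: eq_card => e.
by move: (M0 e); rewrite !inE andb_orl => ->.
Qed.

Definition alt_matching (s : seq (T * seq T)) : {set {set T}} :=
  \bigcup_(lp <- s) alt_pairs lp.1 lp.2.

Lemma alt_matching_nil : alt_matching [::] = set0.
Proof. by rewrite /alt_matching big_nil. Qed.

Lemma alt_matching_cons x p s :
  alt_matching ((x, p) :: s) = alt_pairs x p :|: alt_matching s.
Proof. by rewrite /alt_matching big_cons. Qed.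

Lemma head_mem_alt_matching s lp : lp \in s -> ~~ odd (size lp.2) ->
  lp.2 != [::] -> [set lp.1; head lp.1 lp.2] \in alt_matching s.
Proof.
by move=> lp_s even_p p0; rewrite /alt_matching (big_rem lp) //= inE head_alt_pairs.
Qed.

End AlternateEdges.

Section TrimmingForest.
Variables (n r : nat) (A : 'M[Cplx]_(n + r)) (F : {set 'I_(n + r) * 'I_(n + r)}).
Hypothesis forestF : spanning_forest A F.
Local Notation T := 'I_(n + r).
Local Notation edge_rel G := (fun a b : T => (a, b) \in G).
Implicit Types (G : {set T * T}) (l v w a b : T) (p : seq T).

Lemma inV_inR v : inV v = ~~ inR v.
Proof. by rewrite /inV /inR -ltnNge. Qed.

Lemma forest_src a b : (a, b) \in F -> inV a.
Proof.
case: forestF => _ _ outR _ Fab; rewrite inV_inR; apply/negP => /outR/eqP.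
by rewrite cards_eq0 => /eqP/setP/(_ (a, b)); rewrite !inE Fab eqxx.
Qed.

Lemma forest_succ_uniq v a b : (v, a) \in F -> (v, b) \in F -> a = b.
Proof.
move=> Fva Fvb; case: forestF => _ outV _ _.
have /eqP/cards1P[e outs_v] := outV v (forest_src Fva).
have : (v, a) \in outs F v by rewrite inE Fva eqxx.
have : (v, b) \in outs F v by rewrite inE Fvb eqxx.
by rewrite outs_v !inE => /eqP <- /eqP[].
Qed.

Lemma subforest_acyclic G x p : G \subset F ->
  path (edge_rel G) x p -> p != [::] -> last x p != x.
Proof.
case: forestF => _ _ _ acyclic /subsetP sGF pth; apply: acyclic.
by apply: sub_path pth => a b /sGF.
Qed.

Lemma subforest_path_uniq G x p : G \subset F -> path (edge_rel G) x p -> uniq (x :: p).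
Proof. by move/subforest_acyclic; apply: acyclic_path_uniq. Qed.

Lemma forest_edge_neq a b : (a, b) \in F -> a != b.
Proof.
move=> Fab; apply/eqP => eq_ab; subst b.
by have := @subforest_acyclic F a [:: a] (subxx F); rewrite /= Fab eqxx => /(_ isT isT).
Qed.

Lemma leaf_exists G : G \subset F -> G != set0 -> exists v, leafb G v.
Proof.
move=> sGF /set0Pn[[x y] Gxy].
pose anc v := [set u | connect (edge_rel G) u v].
pose source u := (0 < #|outs G u|)%N.
have sourceP u w : (u, w) \in G -> source u.
  by move=> Guw; rewrite /source card_gt0; apply/set0Pn; exists (u, w); rewrite inE Guw eqxx.
(* A source with fewest ancestors has no in-edge (u, v): u would have fewer. *)
case: (@arg_minnP _ x source (fun v => #|anc v|) (sourceP _ _ Gxy)) => v.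
rewrite /source => out_v min_v.
have [[v' w] /setIdP[Gvw /= /eqP v'v]] : exists e, e \in outs G v.
  by apply/set0Pn; rewrite -card_gt0.
subst v'; exists v; rewrite /leafb out_v (forest_src (subsetP sGF _ Gvw)) /=.
rewrite cards_eq0; apply/eqP/setP => -[u v']; rewrite !inE /=.
apply/negbTE/andP => -[Guv /eqP v'v]; subst v'.
have := min_v u (sourceP _ _ Guv); apply/negP; rewrite -ltnNge.
apply: proper_card; apply/properP; split.
  by apply/subsetP => t; rewrite !inE => /connect_trans; apply; exact: connect1.
exists v; rewrite !inE ?connect0 //; apply/negP => /connectP[p pth uv].
have := subforest_acyclic sGF (_ : path (edge_rel G) u (v :: p)).
by rewrite /= Guv pth -uv eqxx => /(_ isT isT).
Qed.

Lemma max_leafP G : G \subset F -> G != set0 ->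
  exists2 l, max_leaf G = Some l & leafb G l.
Proof.
move=> sGF G0; rewrite /max_leaf; case: pickP => [l /andP[leaf_l _]|none].
  by exists l.
have [v leaf_v] := leaf_exists sGF G0.
case: (arg_maxnP (fun w : T => val w) leaf_v) => w leaf_w max_w.
have := none w; rewrite leaf_w /= => /negbT/negP; case.
by apply/forallP => u; apply/implyP; apply: max_w.
Qed.

Lemma follow_path k G l v : path (edge_rel G) v (follow k G l v).
Proof.
elim: k v => [|k IHk] v //=; rewrite /succ; case: pickP => [w Gvw|_] //=.
by case: ifP => _ /=; rewrite Gvw ?IHk.
Qed.

Lemma follow_belast k G l v w :
  w \in belast v (follow k G l v) -> w = v \/ inV w.
Proof.
elim: k v => [|k IHk] v /=; first by rewrite in_nil.
rewrite /succ; case: pickP => [u _|_] /=; last by rewrite in_nil.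
case: ifP => stop_u /=; first by rewrite inE => /eqP; left.
rewrite inE => /orP[/eqP|/IHk[->|]]; [by left | | by right].
by right; move: stop_u; rewrite /stopb inV_inR; case: (inR u).
Qed.

Lemma follow_nonempty k G l v w : (v, w) \in G -> follow k.+1 G l v != [::].
Proof.
move=> Gvw /=; rewrite /succ.
by case: pickP => [u _|/(_ w)]; [case: ifP | rewrite Gvw].
Qed.

Lemma lambda_nonempty G l w : (l, w) \in G -> lambda G l != [::].
Proof.
have [k nr_eq] : exists k, (n + r = k.+1)%N.
  by exists (n + r).-1; rewrite prednK // (leq_ltn_trans _ (ltn_ord l)).
by move/(follow_nonempty k l); rewrite -nr_eq.
Qed.

Lemma lambda_belast_inV G l w :
  inV l -> w \in belast l (lambda G l) -> inV w.
Proof. by move=> lV /follow_belast[->|]. Qed.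

Lemma outs_belast G l p v : G \subset F -> path (edge_rel G) l p ->
  v \in belast l p ->
  exists2 b, (v, b) \in zip (l :: p) p & outs G v = [set (v, b)].
Proof.
move=> sGF pth /belast_mem_zip[b zvb]; exists b => //.
have Gvb := path_mem_zip pth zvb.
apply/setP => -[u w]; rewrite !inE /=.
apply/andP/eqP => [[Guw /eqP uv]|[-> ->]]; last by rewrite Gvb.
by subst u; rewrite (forest_succ_uniq (subsetP sGF _ Guw) (subsetP sGF _ Gvb)).
Qed.

Lemma outs_setD_belast G l p v : G \subset F -> path (edge_rel G) l p ->
  v \in belast l p -> outs (G :\: path_edges l p) v = set0.
Proof.
move=> sGF pth /(outs_belast sGF pth)[b zvb outs_v].
apply/setP => e; rewrite !inE; apply/negbTE/negP => /andP[/andP[eE Ge] ev].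
have : e \in outs G v by rewrite inE Ge ev.
by rewrite outs_v inE => /eqP eq_e; move: eE; rewrite eq_e zvb.
Qed.

Lemma outs_setD_notin G l p v :
  v \notin belast l p -> outs (G :\: path_edges l p) v = outs G v.
Proof.
move=> vNbl; apply/setP => -[u w]; rewrite !inE /=.
have [->|] := eqVneq u v; last by rewrite !andbF.
by rewrite (contraNN (@mem_zip_belast _ l p v w) vNbl).
Qed.

(* The invariant of the trimming: for G = F it says that M is a perfect
   matching of G made of edges of F. *)
Definition out_matching G (M : {set {set T}}) : Prop :=
  (forall e, e \in M -> exists a b, [/\ e = [set a; b], inV a, inV b & (a, b) \in G]) /\
  (forall v, inV v -> #|[set e in M | v \in e]| = #|outs G v|).

Lemma out_matching0 : out_matching set0 set0.
Proof.
have card0 (U : finType) (P : pred U) : #|[set x in (set0 : {set U}) | P x]| = 0.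
  by apply/eqP; rewrite cards_eq0; apply/eqP/setP => x; rewrite !inE.
by split=> [e|v _]; rewrite ?inE // /outs !card0.
Qed.

Lemma out_matching_path G M l p : G \subset F -> path (edge_rel G) l p ->
  uniq (l :: p) -> ~~ odd (size p) -> {in belast l p, forall w, inV w} ->
  out_matching (G :\: path_edges l p) M -> out_matching G (alt_pairs l p :|: M).
Proof.
move=> sGF pth uniq_lp even_p belastV [edgesM degM]; split.
  move=> e; rewrite inE => /orP[/alt_pairsP[a [b [-> zab al bl]]]|/edgesM].
    exists a, b; split => //; try exact: belastV.
    exact: path_mem_zip pth zab.
  by case=> a [b [-> aV bV /setDP[Gab _]]]; exists a, b.
have uniq_bl : uniq (belast l p) by move: uniq_lp; rewrite lastI rcons_uniq => /andP[].
move=> v vV; have [vbl|vNbl] := boolP (v \in belast l p).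
  rewrite setUC card_setU_at ?degM ?(outs_setD_belast sGF pth) ?cards0 //.
  have [b _ ->] := outs_belast sGF pth vbl.
  by rewrite card_alt_pairs_at // vbl cards1.
rewrite card_setU_at ?card_alt_pairs_at ?(negbTE vNbl) //.
by rewrite degM // outs_setD_notin.
Qed.

Lemma leafb_out G l : leafb G l -> exists w, (l, w) \in G.
Proof.
case/and3P=> _; rewrite card_gt0 => /set0Pn[[u w]].
by rewrite inE => /andP[Guw /eqP /= ul]; exists w; rewrite -ul.
Qed.

Lemma trim_nonempty_paths f G :
  G \subset F -> all (fun lp => lp.2 != [::]) (trim f G).
Proof.
elim: f G => [|f IHf] G sGF //=; have [//|G0] := eqVneq G set0.
have [l -> leaf_l] := max_leafP sGF G0; have [w Glw] := leafb_out leaf_l.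
by rewrite /= (lambda_nonempty Glw) IHf // (subset_trans (subsetDl _ _) sGF).
Qed.

Lemma trim_out_matching f G : G \subset F -> (#|G| <= f)%N ->
  all (fun lp => ~~ odd (size lp.2)) (trim f G) ->
  out_matching G (alt_matching (trim f G)).
Proof.
elim: f G => [|f IHf] G sGF cardG.
  move: cardG; rewrite leqn0 cards_eq0 => /eqP-> _.
  by rewrite alt_matching_nil; exact: out_matching0.
have [->|G0] := eqVneq G set0.
  by rewrite /= eqxx alt_matching_nil => _; exact: out_matching0.
have [l ml leaf_l] := max_leafP sGF G0.
rewrite /= (negbTE G0) ml alt_matching_cons => /andP[even_p even_rest].
set p := lambda G l; set G' := G :\: path_edges l p.
have pth : path (edge_rel G) l p := follow_path _ _ _ _.
have [w /lambda_nonempty p0] := leafb_out leaf_l.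
have cardG' : (#|G'| <= f)%N.
  rewrite -ltnS (leq_trans _ cardG) //; apply/proper_card/properP.
  split; first exact: subsetDl.
  exists (l, head l p); first exact: path_mem_zip pth (head_mem_zip l p0).
  by rewrite !inE head_mem_zip.
apply: out_matching_path => //.
- exact: subforest_path_uniq pth.
- by move=> u; apply: lambda_belast_inV; case/and3P: leaf_l.
- exact: IHf (subset_trans (subsetDl _ _) sGF) cardG' even_rest.
Qed.

Lemma condC_rel_condC M0 : condC_rel F M0 -> condC F.
Proof. by move/allP => relM0; apply/allP => lp /relM0/andP[]. Qed.

Lemma condC_perfect_matching : condC F ->
  exists M0, [/\ perfect_matching A M0, compatible F M0 & condC_rel F M0].
Proof.
move=> condCF; exists (alt_matching (trimming F)).
have [edgesM degM] := trim_out_matching (subxx F) (leqnn #|F|) condCF.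
have nonempty := trim_nonempty_paths #|F| (subxx F).
case: forestF => edgeF outV _ _; split; first split.
- move=> e /edgesM[a [b [-> aV bV Fab]]].
  by exists a, b; split => //; [exact: forest_edge_neq | exact: edgeF Fab].
- by move=> v vV; rewrite degM // outV.
- move=> i j /edgesM[a [b [Eij _ _ Fab]]].
  by case: (set2_eq_pair Eij) => ->; rewrite Fab ?orbT.
- apply/allP => lp lp_in; have even_lp := allP condCF _ lp_in.
  by rewrite even_lp head_mem_alt_matching // (allP nonempty _ lp_in).
Qed.

End TrimmingForest.

Theorem lemma8 (n r : nat) (A : 'M[Cplx]_(n + r)) :
  (2 <= n)%N -> ~~ odd n -> (1 <= r)%N ->
  (A^T = - A)%R ->
  (forall j : 'I_(n + r), (\sum_(i < n + r) A i j)%R = 0%R) ->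
  forall F : {set 'I_(n + r) * 'I_(n + r)},
    (spanning_forest A F /\ condC F) <->
    (exists M0 : {set {set 'I_(n + r)}},
        perfect_matching A M0 /\
        [/\ spanning_forest A F, compatible F M0 & condC_rel F M0]).
Proof.
(* Only the forest structure of F matters. *)
move=> _ _ _ _ _ F; split.
  case=> forestF /(condC_perfect_matching forestF)[M0 [matchM0 compM0 relM0]].
  by exists M0.
by case=> M0 [_ [forestF _ /condC_rel_condC]].
Qed.
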